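(* Let $\Gamma=(\mathcal{G},\mathcal{I},\boldsymbol{c})$ be a nonatomic routing game and suppose there is $\beta\in\mathbb{R}_+$ such that every edge $e\in\mathcal{E}$ has a BPR-type cost function $c_e(x)=t_e+a_e x^{\beta}$ with $t_e,a_e\in\mathbb{R}_+$. Let $\boldsymbol{\tau}\in\mathbb{R}^{\mathcal{E}}$ be a toll vector such that $$\sum_{e\in p}\Bigl(\tau_e+\tfrac{\beta}{\beta+1}t_e\Bigr)\le \sum_{e\in p'}\Bigl(\tau_e+\tfrac{\beta}{\beta+1}t_e\Bigr)$$ for all $i\in\mathcal{I}$, all $p\in\mathcal{P}^{*i}$ and all $p'\in\mathcal{P}^i$. Then $\boldsymbol{\tau}$ is a demand-independent optimal toll (DIOT) for $\Gamma$.
   Context: A nonatomic routing game $\Gamma=(\mathcal{G},\mathcal{I},\boldsymbol{c})$ consists of a finite directed multigraph $\mathcal{G}=(\mathcal{V},\mathcal{E})$, a finite set $\mathcal{I}$ of origin-destination (OD) pairs $i$, each with origin $o^i\in\mathcal{V}$ and destination $d^i\in\mathcal{V}$, and for each edge $e$ a nondecreasing continuous cost function $c_e:\mathbb{R}_+\to\mathbb{R}_+$. $\mathcal{P}^i$ is the set of simple directed $o^i$–$d^i$ paths, $\mathcal{P}=\bigcup_i\mathcal{P}^i$. For a demand vector $\boldsymbol{\mu}\in\mathbb{R}_+^{\mathcal{I}}$, the feasible flows are $\mathcal{F}(\boldsymbol{\mu})=\{\boldsymbol{f}\in\mathbb{R}_+^{\mathcal{P}}:\sum_{p\in\mathcal{P}^i}f_p=\mu^i\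 \forall i\}$; the load on $e$ is $x_e=\sum_{p\ni e}f_p$, and the path cost is $c_p(\boldsymbol{f})=\sum_{e\in p}c_e(x_e)$. A flow $\boldsymbol{f}\in\mathcal{F}(\boldsymbol{\mu})$ is a Wardrop equilibrium if for all $i$ and all $p,p'\in\mathcal{P}^i$ with $f_p>0$, $c_p(\boldsymbol{f})\le c_{p'}(\boldsymbol{f})$. The total cost is $L(\boldsymbol{f})=\sum_{p}f_pc_p(\boldsymbol{f})$; a system optimum for $\boldsymbol{\mu}$ is a minimizer of $L$ over $\mathcal{F}(\boldsymbol{\mu})$. $\mathcal{P}^{*i}$ is the set of paths $p\in\mathcal{P}^i$ such that $f^*_p(\boldsymbol{\mu})>0$ for some demand vector $\boldsymbol{\mu}$ and some corresponding system optimum $\boldsymbol{f}^*(\boldsymbol{\mu})$. For a toll vector $\boldsymbol{\tau}\in\mathbb{R}^{\mathcal{E}}$ (entries may be negative), $\Gamma^{\boldsymbol{\tau}}$ is the game with edge costs $c_e(x)+\tau_e$. A toll vector $\boldsymbol{\tau}$ is a demand-independent optimal toll (DIOT) for $\Gamma$ if for every demand vector $\boldsymbol{\mu}\in\mathbb{R}_+^{\mathcal{I}}$, every Wardrop equilibrium of $\Gamma^{\boldsymbol{\tau}}$ with demand $\boldsymbol{\mu}$ is a system optimum of $\Gamma$ for demand $\boldsymbol{\mu}$ (i.e., minimizes $L$, computed with the untolled costs, over $\mathcal{F}(\boldsymbol{\mu})$). *)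

From HB Require Import structures.
From mathcomp Require Import all_boot all_order all_algebra.
From mathcomp Require Import all_classical all_reals exp.
Set Implicit Arguments. Unset Strict Implicit. Unset Printing Implicit Defensive.
Import Order.TTheory GRing.Theory Num.Theory.
Local Open Scope ring_scope.

Section Routing.
Variables (R : realType) (V E I : finType)
          (src dst : E -> V) (orig dest : I -> V).

Fixpoint is_walk (u v : V) (p : seq E) : bool :=
  match p with
  | [::] => u == v
  | e :: p' => (src e == u) && is_walk (dst e) v p'
  end.

Definition is_simple_path (u v : V) (p : seq E) : bool :=
  is_walk u v p && uniq (u :: map dst p).

Definition short_seqs : seq (seq E) :=
  flatten [seq [seq tval t | t <- enum {: k.-tuple E}] | k <- iota 0 #|E|.+1].

(* P^i : the (finite) set of simple o^i - d^i paths, as an explicit list.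
   (A simple path has distinct edges, hence length <= #|E|.) *)
Definition paths (i : I) : seq (seq E) :=
  [seq p <- short_seqs | is_simple_path (orig i) (dest i) p].

(* A flow assigns to each OD pair i and each path p the flow f i p of
   commodity i on p (only values for p in paths i matter). *)
Definition feasible (mu : I -> R) (f : I -> seq E -> R) : Prop :=
  (forall i p, p \in paths i -> 0 <= f i p) /\
  (forall i, \sum_(p <- paths i) f i p = mu i).

Definition load (f : I -> seq E -> R) (e : E) : R :=
  \sum_(i : I) \sum_(p <- paths i | e \in p) f i p.

Definition path_cost (c : E -> R -> R) (f : I -> seq E -> R) (p : seq E) : R :=
  \sum_(e <- p) c e (load f e).

Definition total_cost (c : E -> R -> R) (f : I -> seq E -> R) : R :=
  \sum_(i : I) \sum_(p <- paths i) f i p * path_cost c f p.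

Definition wardrop (c : E -> R -> R) (mu : I -> R) (f : I -> seq E -> R) : Prop :=
  feasible mu f /\
  forall i p p', p \in paths i -> p' \in paths i -> 0 < f i p ->
    path_cost c f p <= path_cost c f p'.

Definition system_optimum (c : E -> R -> R) (mu : I -> R) (f : I -> seq E -> R)
  : Prop :=
  feasible mu f /\ forall g, feasible mu g -> total_cost c f <= total_cost c g.

Definition Pstar (c : E -> R -> R) (i : I) (p : seq E) : Prop :=
  p \in paths i /\
  exists (mu : I -> R) (f : I -> seq E -> R),
    (forall j, 0 <= mu j) /\ system_optimum c mu f /\ 0 < f i p.

Definition tolled (c : E -> R -> R) (tau : E -> R) : E -> R -> R :=
  fun e x => c e x + tau e.

Definition DIOT (c : E -> R -> R) (tau : E -> R) : Prop :=
  forall (mu : I -> R), (forall i, 0 <= mu i) ->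
  forall f, wardrop (tolled c tau) mu f -> system_optimum c mu f.

End Routing.

(* BPR-type cost c_e(x) = t_e + a_e x^beta  (powR: 0 `^ 0 = 1) *)
Definition bpr (R : realType) (E : Type) (t a : E -> R) (beta : R) : E -> R -> R :=
  fun e x => t e + a e * powR x beta.

From Pilot Require Import Defs.
From HB Require Import structures.
From mathcomp Require Import all_boot all_order all_algebra.
From mathcomp Require Import all_classical all_reals exp.
From mathcomp Require Import all_analysis.
From mathcomp.algebra_tactics Require Import ring lra.
Import Order.TTheory GRing.Theory Num.Theory numFieldNormedType.Exports.
Local Open Scope ring_scope.

(* With the adjusted tolls k_e = tau_e + beta/(beta+1) t_e and
   T(h) = sum_p h_p sum_(e in p) k_e, the Beckmann potential of the tolled
   BPR game is Phi(h) = L(h)/(beta+1) + T(h).  Phi is convex, so the Wardrop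
   equilibrium f of the tolled game minimises it.  A system optimum s exists
   by compactness and uses only paths of P^*, on which the adjusted toll path
   cost is minimal; hence T(s) <= T(f), and Phi(f) <= Phi(s) gives
   L(f) <= L(s). *)

Section RealAnalysis.
Context {R : realType}.

Lemma continuous_powR_norm (b : R) : 0 <= b -> continuous (fun x : R => powR `|x| b).
Proof.
move=> b0 x.
have [->|bn0] := eqVneq b 0.
  rewrite (_ : (fun x : R => _) = fun=> 1); first exact: cst_continuous.
  by apply: funext => y; rewrite powRr0.
have [x0|xn0] := eqVneq x 0.
  apply/cvgrPdist_lt => e e0.
  have d0 : 0 < powR e b^-1 by rewrite powR_gt0.
  apply: filterS (near_ball x _ d0) => y; rewrite /ball /= x0 sub0r normrN => hy.
  rewrite normr0 powR0 // sub0r normrN ger0_norm ?powR_ge0 //.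
  have := @gt0_ltr_powR R b _ _ _ _ _ hy.
  rewrite -powRrM mulVf // powRr1 ?(ltW e0) //; apply.
  - by rewrite lt_neqAle eq_sym bn0.
  - by rewrite nnegrE.
  - by rewrite nnegrE powR_ge0.
pose g (y : R) := expR (b * ln `|y|).
have ln_norm_cont : {for x, continuous (fun y : R => ln `|y|)}.
  apply: (continuous_comp (@norm_continuous _ R^o x)).
  by apply: continuous_ln; rewrite normr_gt0.
have g_cont : {for x, continuous g}.
  exact: continuous_comp (continuous_comp ln_norm_cont (@mulrl_continuous _ b _))
                         (@continuous_expR _ _).
have near_x : \forall y \near x, `|x - y| < `|x| by apply: near_ball; rewrite normr_gt0.
have g_powR : {near x, g =1 (fun y : R => powR `|y| b)}.
  apply: filterS near_x => y hy; rewrite /g /powR normr_eq0.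
  by case: eqP => // y0; move: hy; rewrite y0 subr0 ltxx.
rewrite /continuous_at (_ : powR `|x| b = g x); last first.
  by rewrite /powR /g normr_eq0 (negbTE xn0).
exact: cvg_trans (near_eq_cvg g_powR) g_cont.
Qed.

Lemma continuous_sum (T : topologicalType) (X : Type) (s : seq X) (P : pred X)
    (F : X -> T -> R) :
  (forall x, continuous (F x)) -> continuous (fun v => \sum_(x <- s | P x) F x v).
Proof. by move=> F_cont; apply: continuous_big => [|x _]; [exact: add_continuous|]. Qed.

(* Young's inequality with the conjugate exponents b + 1 and (b + 1) / b. *)
Lemma powR_tangent_le (b x y : R) : 0 <= b -> 0 <= x -> 0 <= y ->
  (b + 1) * powR x b * (y - x) <= powR y b * y - powR x b * x.
Proof.
move=> b0 x0 y0.
have [->|bn0] := eqVneq b 0; first by rewrite !powRr0 add0r !mul1r.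
have bp : 0 < b by rewrite lt_neqAle eq_sym bn0.
have s0 : 0 < b + 1 by lra.
have sn0 : b + 1 != 0 by rewrite gt_eqF.
have conj : (b + 1)^-1 + ((b + 1) / b)^-1 = 1.
  by rewrite invf_div; field; rewrite sn0.
have powRS z : 0 <= z -> powR z (b + 1) = powR z b * z.
  by move=> z0; rewrite powRD ?powRr1 ?(negbTE sn0).
have := conjugate_powR y0 (powR_ge0 x b) s0 (divr_gt0 s0 bp) conj.
rewrite -powRrM (_ : b * ((b + 1) / b) = b + 1); last by field.
rewrite !powRS // => young.
have young' : (b + 1) * (y * powR x b) <= powR y b * y + b * (powR x b * x).
  have := ler_wpM2l (ltW s0) young.
  suff -> : (b + 1) * (powR y b * y / (b + 1) + powR x b * x / ((b + 1) / b))
         = powR y b * y + b * (powR x b * x) by [].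
  by field; rewrite bn0 sn0.
nra.
Qed.

(* The integral of t + a z^b + tau over [0, x]. *)
Definition bpr_potential (t a tau b x : R) : R :=
  (t + a * powR x b) * x / (b + 1) + (tau + b / (b + 1) * t) * x.

Lemma bpr_potential_tangent_le (t a tau b x y : R) :
  0 <= b -> 0 <= a -> 0 <= x -> 0 <= y ->
  bpr_potential t a tau b x + (t + a * powR x b + tau) * (y - x)
    <= bpr_potential t a tau b y.
Proof.
move=> b0 a0 x0 y0; rewrite /bpr_potential -subr_ge0.
have sn0 : b + 1 != 0 by rewrite gt_eqF //; lra.
have -> : (t + a * powR y b) * y / (b + 1) + (tau + b / (b + 1) * t) * y
     - ((t + a * powR x b) * x / (b + 1) + (tau + b / (b + 1) * t) * x
        + (t + a * powR x b + tau) * (y - x))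
   = a * (powR y b * y - powR x b * x - (b + 1) * powR x b * (y - x)) / (b + 1).
  by field.
apply: divr_ge0; last lra.
by apply: mulr_ge0 => //; rewrite subr_ge0 powR_tangent_le.
Qed.

End RealAnalysis.

Section Sums.
Context {R : realDomainType}.

Lemma ler_term_sum (T : eqType) (s : seq T) (F : T -> R) x :
  x \in s -> (forall y, y \in s -> 0 <= F y) -> F x <= \sum_(y <- s) F y.
Proof.
move=> xs F0; rewrite (big_rem x) //= lerDl big_seq sumr_ge0 // => y hy.
exact/F0/(mem_rem hy).
Qed.

Lemma ler_wsum_supp_min (T : eqType) (s : seq T) (u w C : T -> R) :
  (forall p, p \in s -> 0 <= u p) -> (forall p, p \in s -> 0 <= w p) ->
  \sum_(p <- s) u p = \sum_(p <- s) w p ->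
  (forall p q, p \in s -> q \in s -> 0 < u p -> C p <= C q) ->
  \sum_(p <- s) u p * C p <= \sum_(p <- s) w p * C p.
Proof.
move=> u0 w0 mass C_min.
have [/hasP[p0 p0s up0]|/hasPn supp0] := boolP (has (fun p => 0 < u p) s).
  have -> : \sum_(p <- s) u p * C p = \sum_(p <- s) u p * C p0.
    rewrite big_seq [RHS]big_seq; apply: eq_bigr => p ps.
    have [up|] := boolP (0 < u p); first by rewrite (@le_anti _ _ (C p) (C p0)) // !C_min.
    by rewrite lt_neqAle u0 // andbT negbK => /eqP <-; rewrite !mul0r.
  rewrite -big_distrl /= mass big_distrl /= big_seq [leRHS]big_seq.
  by apply: ler_sum => p ps; rewrite ler_wpM2l ?w0 ?C_min.
have u_eq0 p : p \in s -> u p = 0.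
  by move=> ps; apply/eqP; rewrite eq_le u0 // andbT leNgt supp0.
have w_eq0 p : p \in s -> w p = 0.
  move=> ps; apply/eqP; rewrite eq_le w0 // andbT.
  have <- : \sum_(p <- s) u p = 0 by rewrite big_seq big1 // => p /u_eq0.
  by rewrite mass ler_term_sum.
by rewrite big_seq [leRHS]big_seq !big1 // => p ps; rewrite ?u_eq0 ?w_eq0 // mul0r.
Qed.

End Sums.

Section Flows.
Context {R : realType} {V E I : finType} {src dst : E -> V} {orig dest : I -> V}.
Local Notation paths := (paths src dst orig dest).
Local Notation load := (@load R _ _ _ src dst orig dest).
Local Notation total_cost := (@total_cost R _ _ _ src dst orig dest).
Local Notation feasible := (@feasible R _ _ _ src dst orig dest).
Local Notation system_optimum := (@system_optimum R _ _ _ src dst orig dest).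

Lemma paths_uniq {i p} : p \in paths i -> uniq p.
Proof.
rewrite mem_filter => /andP[/andP[_]].
by rewrite cons_uniq => /andP[_ /map_uniq].
Qed.

Lemma paths_short {i p} : p \in paths i -> p \in short_seqs E.
Proof. by rewrite mem_filter => /andP[]. Qed.

Lemma sum_paths_edges (h : I -> seq E -> R) (k : E -> R) :
  \sum_i \sum_(p <- paths i) h i p * \sum_(e <- p) k e = \sum_e k e * load h e.
Proof.
transitivity (\sum_i \sum_(p <- paths i) \sum_e h i p * (if e \in p then k e else 0)).
  apply: eq_bigr => i _; rewrite big_seq [RHS]big_seq; apply: eq_bigr => p hp.
  by rewrite big_uniq ?(paths_uniq hp) //= big_mkcond mulr_sumr.
under eq_bigr do rewrite exchange_big.
rewrite exchange_big; apply: eq_bigr => e _.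
rewrite mulr_sumr; apply: eq_bigr => i _.
rewrite mulr_sumr [RHS]big_mkcond; apply: eq_bigr => p _.
by case: (e \in p); rewrite ?mulr0 // mulrC.
Qed.

Lemma total_costE c h : total_cost c h = \sum_e c e (load h e) * load h e.
Proof. exact: (sum_paths_edges h (fun e => c e (load h e))). Qed.

Lemma feasible_load_ge0 {mu f} e : feasible mu f -> 0 <= load f e.
Proof.
move=> [f0 _]; apply: sumr_ge0 => i _.
by rewrite big_seq_cond sumr_ge0 // => p /andP[hp _]; exact: f0.
Qed.

Lemma feasible_wsum_supp_min {mu f g} (C : I -> seq E -> R) :
  feasible mu f -> feasible mu g ->
  (forall i p q, p \in paths i -> q \in paths i -> 0 < f i p -> C i p <= C i q) ->
  \sum_i \sum_(p <- paths i) f i p * C i p <= \sum_i \sum_(p <- paths i) g i p * C i p.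
Proof.
move=> [f0 f_mu] [g0 g_mu] C_min; apply: ler_sum => i _.
apply: ler_wsum_supp_min => [p|p||]; [exact: f0 | exact: g0 | | exact: C_min].
by rewrite f_mu g_mu.
Qed.

Definition eq_on_paths (f g : I -> seq E -> R) :=
  forall i p, p \in paths i -> f i p = g i p.

Lemma eq_on_paths_total_cost c {f g} :
  eq_on_paths f g -> total_cost c f = total_cost c g.
Proof.
move=> fg; rewrite !total_costE; apply: eq_bigr => e _.
suff -> : load f e = load g e by [].
apply: eq_bigr => i _; rewrite big_seq_cond [RHS]big_seq_cond.
by apply: eq_bigr => p /andP[hp _]; exact: fg.
Qed.

Lemma system_optimum_nneg_eq (c c' : E -> R -> R) {mu f} :
  (forall e x, 0 <= x -> c e x = c' e x) ->
  system_optimum c' mu f -> system_optimum c mu f.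
Proof.
move=> cc' [hf f_min].
have cost_eq g : feasible mu g -> total_cost c g = total_cost c' g.
  move=> hg; rewrite !total_costE; apply: eq_bigr => e _.
  by rewrite cc' // (feasible_load_ge0 e hg).
by split=> // g hg; rewrite !cost_eq //; exact: f_min.
Qed.

End Flows.

Section Existence.
Context {R : realType} {V E I : finType} {src dst : E -> V} {orig dest : I -> V}.
Context {c : E -> R -> R}.
Hypothesis c_cont : forall e, continuous (c e).
Local Notation paths := (paths src dst orig dest).
Local Notation load := (@load R _ _ _ src dst orig dest).
Local Notation total_cost := (@total_cost R _ _ _ src dst orig dest).
Local Notation feasible := (@feasible R _ _ _ src dst orig dest).
Local Notation system_optimum := (@system_optimum R _ _ _ src dst orig dest).
Local Notation eq_on_paths := (@eq_on_paths R _ _ _ src dst orig dest).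

(* Flows are encoded as row vectors indexed by pairs (commodity, position of
   the path in [short_seqs E]); the coordinates of non-paths are set to 0. *)
Let N := size (short_seqs E).
Let K := (I * 'I_N.+1)%type.
Let n := #|{: K}|.
Let rank_of (i : I) (p : seq E) : 'I_n :=
  enum_rank ((i, inord (index p (short_seqs E))) : K).

Let flow_of (v : 'rV[R]_n) : I -> seq E -> R := fun i p => v ord0 (rank_of i p).

Let vec_of (g : I -> seq E -> R) : 'rV[R]_n :=
  \row_(j < n) let: (i, k) := (enum_val j : K) in
               if nth [::] (short_seqs E) k \in paths i
               then g i (nth [::] (short_seqs E) k) else 0.

Let flow_of_vec_of g : eq_on_paths (flow_of (vec_of g)) g.
Proof.
move=> i p hp; rewrite /flow_of /vec_of mxE /rank_of enum_rankK inordK; last first.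
  by rewrite ltnS index_size.
by rewrite nth_index ?hp //; exact: paths_short hp.
Qed.

Let total_cost_vec_cont : continuous (fun v => total_cost c (flow_of v)).
Proof.
rewrite /Defs.total_cost /Defs.path_cost.
apply: continuous_sum => i; apply: continuous_sum => p v.
apply: continuousM; first exact: coord_continuous.
apply: continuous_sum => e w.
have load_cont : continuous (fun v => load (flow_of v) e).
  by apply: continuous_sum => j; apply: continuous_sum => q; exact: coord_continuous.
exact: continuous_comp (load_cont w) (c_cont e _).
Qed.

Lemma system_optimum_exists {mu f0} : feasible mu f0 -> exists f, system_optimum c mu f.
Proof.
move=> hf0.
have mu0 i : 0 <= mu i.
  by rewrite -(hf0.2 i) big_seq sumr_ge0 // => p hp; exact: hf0.1.
pose B := \sum_i mu i.
have B0 : 0 <= B by rewrite sumr_ge0.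
have mu_le_B i : mu i <= B by apply: ler_term_sum; rewrite ?mem_index_enum.
pose box := [set v : 'rV[R]_n | forall j, `[0, B]%classic (v ord0 j)]%classic.
pose demand := (\bigcap_(i in setT)
   [set v : 'rV[R]_n | \sum_(p <- paths i) v ord0 (rank_of i p) = mu i])%classic.
have A_compact : compact (box `&` demand)%classic.
  apply: compact_closedI; first exact: (rV_compact (fun=> @segment_compact R 0 B)).
  apply: closed_bigI => i _.
  apply: (@preimage_closed _ _ (fun v : 'rV[R]_n => \sum_(p <- paths i) v ord0 (rank_of i p))
                          [set x | x = mu i]%classic); last exact: closed_eq.
  by move=> v _; apply: continuous_sum => p; exact: coord_continuous.
have A_vec_of g : feasible mu g -> (box `&` demand)%classic (vec_of g).
  move=> [g0 g_mu]; split.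
    move=> j /=; rewrite /vec_of mxE; case: (enum_val j) => i k /=.
    rewrite in_itv /=; case: ifP => hp; last by rewrite lexx B0.
    rewrite g0 //=; apply: le_trans (mu_le_B i); rewrite -(g_mu i).
    by apply: ler_term_sum => // q hq; exact: g0.
  move=> i _ /=; rewrite -(g_mu i) big_seq [RHS]big_seq.
  by apply: eq_bigr => p hp; exact: flow_of_vec_of.
have [v vA v_min] := @EVT_min_rV R n (fun v => total_cost c (flow_of v))
  (box `&` demand)%classic (ex_intro _ _ (A_vec_of _ hf0)) A_compact
  (continuous_subspaceT total_cost_vec_cont).
have hv : feasible mu (flow_of v).
  move: vA; rewrite inE => -[v_box v_mu]; split; last by move=> i; exact: v_mu.
  by move=> i p _; have /= := v_box (rank_of i p); rewrite in_itv /= => /andP[].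
exists (flow_of v); split=> // g hg.
rewrite -(eq_on_paths_total_cost c (flow_of_vec_of g)).
by apply: v_min; rewrite inE; exact: A_vec_of.
Qed.

End Existence.

Section BPR.
Context {R : realType} {V E I : finType} {src dst : E -> V} {orig dest : I -> V}.
Context {t a tau : E -> R} {b : R}.
Hypothesis b0 : 0 <= b.
Hypothesis a0 : forall e, 0 <= a e.
Local Notation paths := (paths src dst orig dest).
Local Notation load := (@load R _ _ _ src dst orig dest).
Local Notation total_cost := (@total_cost R _ _ _ src dst orig dest).
Local Notation feasible := (@feasible R _ _ _ src dst orig dest).
Local Notation c := (bpr t a b).

Lemma bpr_system_optimum_exists {mu f0} :
  feasible mu f0 -> exists f, system_optimum src dst orig dest c mu f.
Proof.
move=> hf0; pose c' e (x : R) := t e + a e * powR `|x| b.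
have c'_cont e : continuous (c' e).
  move=> x; rewrite /c'.
  apply: (@continuousD _ _ _ (fun=> t e) (fun y => a e * powR `|y| b)).
    exact: cst_continuous.
  apply: (@continuousM _ _ (fun=> a e) (fun y => powR `|y| b)).
    exact: cst_continuous.
  exact: continuous_powR_norm.
have [f hf] := system_optimum_exists c'_cont hf0.
exists f; apply: system_optimum_nneg_eq hf => e x x0.
by rewrite /c' ger0_norm.
Qed.

Definition adjusted_toll_cost (h : I -> seq E -> R) : R :=
  \sum_i \sum_(p <- paths i) h i p * \sum_(e <- p) (tau e + b / (b + 1) * t e).

Lemma bpr_potential_sumE h : total_cost c h / (b + 1) + adjusted_toll_cost h =
  \sum_e bpr_potential (t e) (a e) (tau e) b (load h e).
Proof.
rewrite total_costE /adjusted_toll_cost sum_paths_edges mulr_suml -big_split.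
by apply: eq_bigr => e _; rewrite /bpr_potential mulrC.
Qed.

Lemma wardrop_potential_min {mu f g} :
  wardrop src dst orig dest (tolled c tau) mu f -> feasible mu g ->
  total_cost c f / (b + 1) + adjusted_toll_cost f
    <= total_cost c g / (b + 1) + adjusted_toll_cost g.
Proof.
move=> [hf f_eq] hg.
have variational : 0 <= \sum_e tolled c tau e (load f e) * (load g e - load f e).
  under eq_bigr do rewrite mulrBr.
  rewrite sumrB subr_ge0 -!sum_paths_edges.
  exact: feasible_wsum_supp_min hf hg (fun i => f_eq i).
rewrite !bpr_potential_sumE; apply: le_trans (ler_sum _ (fun e _ =>
  bpr_potential_tangent_le (t e) (a e) (tau e) b _ _ b0 (a0 e)
    (feasible_load_ge0 e hf) (feasible_load_ge0 e hg))).
by rewrite [leRHS]big_split lerDl; exact: variational.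
Qed.

End BPR.

Theorem theorem2 (R : realType) (V E I : finType)
  (src dst : E -> V) (orig dest : I -> V)
  (t a : E -> R) (beta : R)
  (hbeta : 0 <= beta) (ht : forall e, 0 <= t e) (ha : forall e, 0 <= a e)
  (tau : E -> R)
  (htau : forall (i : I) (p p' : seq E),
      Pstar src dst orig dest (bpr t a beta) i p ->
      p' \in paths src dst orig dest i ->
      \sum_(e <- p) (tau e + beta / (beta + 1) * t e)
        <= \sum_(e <- p') (tau e + beta / (beta + 1) * t e)) :
  DIOT src dst orig dest (bpr t a beta) tau.
Proof.
move=> mu mu0 f f_eq; have hf := f_eq.1.
have [fs [hfs fs_min]] := bpr_system_optimum_exists (t := t) (a := a) hbeta hf.
split=> // g hg; apply: le_trans (fs_min g hg).
have fs_Pstar i p : p \in paths src dst orig dest i -> 0 < fs i p ->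
    Pstar src dst orig dest (bpr t a beta) i p.
  by move=> hp fs_p; split=> //; exists mu, fs.
have toll_le := feasible_wsum_supp_min
  (fun _ p => \sum_(e <- p) (tau e + beta / (beta + 1) * t e)) hfs hf
  (fun i p q hp hq fs_p => htau i p q (fs_Pstar i p hp fs_p) hq).
have pot := wardrop_potential_min hbeta ha f_eq hfs.
rewrite /adjusted_toll_cost in pot.
rewrite -(ler_pM2r (_ : 0 < (beta + 1)^-1)) ?invr_gt0; lra.
Qed.
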